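(* Let $V$ be a real Hilbert space, $W\subset V$ a finite-dimensional subspace, and $\mathcal M\subset V$ a compact set. For $\sigma\ge0$ let $\mathcal M_\sigma=\{v\in V:\operatorname{dist}(v,\mathcal M)\le\sigma\}$, $$\delta_\sigma=\sup\{\|u-v\|: u,v\in\mathcal M_\sigma,\ u-v\in W^\perp\},\qquad \tilde\delta_\sigma=\sup\{\|u-v\|: u,v\in\mathcal M,\ \|P_Wu-P_Wv\|\le\sigma\}.$$ Then for every $\sigma>0$, $$\delta_\sigma-2\sigma\le\tilde\delta_{2\sigma}\le\delta_\sigma+2\sigma.$$
   Context: $P_W$ is the orthogonal projection onto $W$, $W^\perp$ its orthogonal complement, and $\operatorname{dist}(v,\mathcal M)=\inf_{u\in\mathcal M}\|v-u\|$. *)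

From HB Require Import structures.
From mathcomp Require Import all_boot all_order all_algebra.
From mathcomp Require Import all_classical all_reals all_analysis.
Set Implicit Arguments. Unset Strict Implicit. Unset Printing Implicit Defensive.
Import Order.TTheory GRing.Theory Num.Theory.
Import numFieldNormedType.Exports.
Local Open Scope classical_set_scope.
Local Open Scope ring_scope.

Section Hilbert.
Variables (R : realType) (V : completeNormedModType R).

(* ip is a (real) inner product inducing the norm of V; together with
   completeness of V this makes V a real Hilbert space. *)
Definition is_inner_product (ip : V -> V -> R) : Prop :=
  (forall u v, ip u v = ip v u) /\
  (forall (a : R) u v w, ip (a *: u + v) w = a * ip u w + ip v w) /\
  (forall v, ip v v = `|v| ^+ 2).

Definition finite_dim_subspace (W : set V) : Prop :=
  exists (n : nat) (b : 'I_n -> V),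
    W = [set v | exists c : 'I_n -> R, v = \sum_(i < n) c i *: b i].

Definition orth_compl (ip : V -> V -> R) (W : set V) : set V :=
  [set v | forall w, W w -> ip v w = 0].

Definition orth_proj (ip : V -> V -> R) (W : set V) (v : V) : V :=
  xget 0 [set p | W p /\ orth_compl ip W (v - p)].

Definition dist (M : set V) (v : V) : R := inf [set `|v - u| | u in M].

Definition thicken (M : set V) (sigma : R) : set V :=
  [set v | dist M v <= sigma].

Definition delta (ip : V -> V -> R) (W : set V) (M : set V) (sigma : R) : R :=
  sup [set r | exists u v, thicken M sigma u /\ thicken M sigma v /\
                 orth_compl ip W (u - v) /\ r = `|u - v|].

Definition delta_tilde (ip : V -> V -> R) (W : set V) (M : set V) (sigma : R) : R :=
  sup [set r | exists u v, M u /\ M v /\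
                 `|orth_proj ip W u - orth_proj ip W v| <= sigma /\ r = `|u - v|].
End Hilbert.

From HB Require Import structures.
From mathcomp Require Import all_boot all_order all_algebra.
From mathcomp Require Import all_classical all_reals all_analysis.
From mathcomp Require Import ring lra.
Set Implicit Arguments. Unset Strict Implicit. Unset Printing Implicit Defensive.
Import Order.TTheory GRing.Theory Num.Theory.
Import numFieldNormedType.Exports.
Local Open Scope classical_set_scope.
Local Open Scope ring_scope.

(* Both inequalities compare near-optimal pairs of the two suprema.  If
   u, v lie within sigma of u0, v0 in M and u - v is orthogonal to W, then
   P_W u0 - P_W v0 = P_W ((u0 - u) - (v0 - v)) has norm at most 2 sigma,
   while |u - v| and |u0 - v0| differ by at most 2 sigma.  Conversely, if
   u, v in M have |P_W u - P_W v| <= 2 sigma, shifting u and v towards each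
   other by h = (P_W u - P_W v) / 2 gives two points of M_sigma whose
   difference (u - P_W u) - (v - P_W v) is orthogonal to W.  The orthogonal
   projection onto the finite-dimensional W exists by Gram-Schmidt style
   induction on a spanning family. *)

Lemma subrACA (V : zmodType) (a b c d : V) : (a - b) - (c - d) = (a - c) - (b - d).
Proof. by rewrite !opprD !opprK addrACA. Qed.

Section InnerProduct.
Variables (R : realType) (V : completeNormedModType R) (ip : V -> V -> R).
Hypothesis ip_inner : is_inner_product ip.

Lemma ipC u v : ip u v = ip v u. Proof. by case: ip_inner. Qed.

Lemma ip_lin a u v w : ip (a *: u + v) w = a * ip u w + ip v w.
Proof. by case: ip_inner => _ []. Qed.

Lemma ipvv v : ip v v = `|v| ^+ 2. Proof. by case: ip_inner => _ []. Qed.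

Lemma ip0l w : ip 0 w = 0.
Proof. by have := ip_lin 1 0 0 w; rewrite scale1r addr0 mul1r; lra. Qed.

Lemma ipDl u v w : ip (u + v) w = ip u w + ip v w.
Proof. by rewrite -[u]scale1r ip_lin mul1r scale1r. Qed.

Lemma ipZl a u w : ip (a *: u) w = a * ip u w.
Proof. by rewrite -[a *: u]addr0 ip_lin ip0l addr0. Qed.

Lemma ipBl u v w : ip (u - v) w = ip u w - ip v w.
Proof. by rewrite ipDl -scaleN1r ipZl mulN1r. Qed.

Lemma ip0r w : ip w 0 = 0. Proof. by rewrite ipC ip0l. Qed.

Lemma ipDr u v w : ip w (u + v) = ip w u + ip w v.
Proof. by rewrite ipC ipDl !(ipC w). Qed.

Lemma ipZr a u w : ip w (a *: u) = a * ip w u.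
Proof. by rewrite ipC ipZl ipC. Qed.

Lemma ip_eq0 v : ip v v = 0 -> v = 0.
Proof. by rewrite ipvv => /eqP; rewrite sqrf_eq0 normr_eq0 => /eqP. Qed.

Lemma norm_sqrD u v : `|u + v| ^+ 2 = `|u| ^+ 2 + 2 * ip u v + `|v| ^+ 2.
Proof. by rewrite -!ipvv ipDl !ipDr (ipC v u); ring. Qed.

Definition is_subspace (W : set V) :=
  W 0 /\ forall a u v, W u -> W v -> W (a *: u + v).

Definition has_orth_proj (W : set V) :=
  forall v, exists p, W p /\ orth_compl ip W (v - p).

Lemma is_subspaceB W u v : is_subspace W -> W u -> W v -> W (u - v).
Proof. by move=> [_ WD] Wu Wv; have := WD (-1) v u Wv Wu; rewrite scaleN1r addrC. Qed.

Lemma orth_complB W x y :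
  orth_compl ip W x -> orth_compl ip W y -> orth_compl ip W (x - y).
Proof. by move=> ox oy w Ww; rewrite ipBl ox // oy // subr0. Qed.

Section Projection.
Variable W : set V.
Hypotheses (W_sub : is_subspace W) (W_proj : has_orth_proj W).

Lemma orth_proj_spec v :
  W (orth_proj ip W v) /\ orth_compl ip W (v - orth_proj ip W v).
Proof. exact: (xgetPex 0 (W_proj v)). Qed.

Lemma orth_proj_unique v p :
  W p -> orth_compl ip W (v - p) -> orth_proj ip W v = p.
Proof.
move=> Wp op; have [Wq oq] := orth_proj_spec v.
set q := orth_proj ip W v in Wq oq *.
have Wqp : W (q - p) by apply: is_subspaceB.
apply/eqP; rewrite -subr_eq0; apply/eqP/ip_eq0.
have e : q - p = (v - p) - (v - q) by rewrite subrACA subrr add0r opprB.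
by rewrite {1}e ipBl op // oq // subr0.
Qed.

Lemma orth_projB u v :
  orth_proj ip W (u - v) = orth_proj ip W u - orth_proj ip W v.
Proof.
have [Wu ou] := orth_proj_spec u; have [Wv ov] := orth_proj_spec v.
apply: orth_proj_unique; first exact: is_subspaceB.
by rewrite subrACA; apply: orth_complB.
Qed.

Lemma orth_proj_orth z : orth_compl ip W z -> orth_proj ip W z = 0.
Proof. by move=> oz; apply: orth_proj_unique; [case: W_sub | rewrite subr0]. Qed.

Lemma norm_orth_proj_le v : `|orth_proj ip W v| <= `|v|.
Proof.
have [Wq oq] := orth_proj_spec v; set q := orth_proj ip W v in Wq oq *.
have pyth : `|v| ^+ 2 = `|q| ^+ 2 + `|v - q| ^+ 2.
  by rewrite -{1}(subrK q v) norm_sqrD oq // mulr0 addr0 addrC.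
have sq : `|q| ^+ 2 <= `|v| ^+ 2 by rewrite pyth lerDl sqr_ge0.
by rewrite -(ler_pXn2r (_ : 0 < 2)%N) ?nnegrE.
Qed.

(* Projecting onto W + Rz: remove from v - P v its component along z - P z. *)
Lemma has_orth_proj_extend z :
  has_orth_proj [set v | exists w a, W w /\ v = w + a *: z].
Proof.
move=> v.
have [Wp op] := orth_proj_spec v; set p := orth_proj ip W v in Wp op.
have [Wq oq] := orth_proj_spec z; set q := orth_proj ip W z in Wq oq.
set e := z - q; set c := ip (v - p) e / ip e e.
have ortW w : W w -> ip (v - (p + c *: e)) w = 0.
  by move=> Ww; rewrite opprD addrA ipBl op // ipZl (oq w Ww) mulr0 subr0.
have orte : ip (v - (p + c *: e)) e = 0.
  rewrite opprD addrA ipBl ipZl /c.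
  have [ee0|ee0] := eqVneq (ip e e) 0.
    by rewrite ee0 mulr0 subr0 (ip_eq0 ee0) ip0r.
  by rewrite divfK // subrr.
exists (p + c *: e); split.
  exists (p - c *: q), c; split; first by rewrite -scaleNr addrC; apply: W_sub.2.
  by rewrite /e scalerBr addrCA addrC.
move=> _ [w [a [Ww ->]]]; rewrite ipDr ipZr ortW // add0r.
by rewrite -(subrK q z) -/e ipDr orte ortW // addr0 mulr0.
Qed.

End Projection.

Definition span n (b : 'I_n -> V) : set V :=
  [set v | exists c : 'I_n -> R, v = \sum_(i < n) c i *: b i].

Lemma span_subspace n (b : 'I_n -> V) : is_subspace (span b).
Proof.
split; first by exists (fun _ => 0); rewrite big1 // => i _; rewrite scale0r.
move=> a u v [cu ->] [cv ->]; exists (fun i => a * cu i + cv i).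
rewrite scaler_sumr -big_split /=; apply: eq_bigr => i _.
by rewrite scalerDl scalerA.
Qed.

Lemma spanS n (b : 'I_n.+1 -> V) :
  span b = [set v | exists w a, span (fun i => b (widen_ord (leqnSn n) i)) w
                                  /\ v = w + a *: b ord_max].
Proof.
apply/seteqP; split => v.
  move=> [c ->]; rewrite big_ord_recr /=; do 2 eexists; split => //.
  by exists (fun i => c (widen_ord (leqnSn n) i)).
move=> [w [a [[c ->] ->]]].
exists (fun i => if unlift ord_max i is Some j then c j else a).
rewrite big_ord_recr /= unlift_none; congr (_ + _); apply: eq_bigr => i _.
have -> : widen_ord (leqnSn n) i = lift ord_max i.
  by apply/val_inj; rewrite /= /bump leqNgt ltn_ord.
by rewrite liftK.
Qed.

Lemma has_orth_proj_span n (b : 'I_n -> V) : has_orth_proj (span b).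
Proof.
elim: n b => [|n IH] b.
  move=> v; exists 0; split; first by exists (fun _ => 0); rewrite big_ord0.
  by move=> w [c ->]; rewrite big_ord0 ip0r.
by rewrite spanS; apply: has_orth_proj_extend; [exact: span_subspace | exact: IH].
Qed.

Lemma finite_dim_subspace_orth_proj W :
  finite_dim_subspace W -> is_subspace W /\ has_orth_proj W.
Proof. by move=> [n [b ->]]; split; [exact: span_subspace | exact: has_orth_proj_span]. Qed.

End InnerProduct.

Section Thickening.
Variables (R : realType) (V : completeNormedModType R) (M : set V).

Lemma dist_le x u : M x -> dist M u <= `|u - x|.
Proof. by move=> Mx; apply: ge_inf; [exists 0 => _ [y _ <-] | exists x]. Qed.

Lemma thicken_near s x u : M x -> `|u - x| <= s -> thicken M s u.
Proof. by move=> Mx; apply: le_trans (dist_le u Mx). Qed.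

Hypotheses (M_compact : compact M) (M_neq0 : M !=set0).

Lemma dist_attained u : exists2 x, M x & `|u - x| <= dist M u.
Proof.
have cont : {within M, continuous (fun x => `|u - x|)}.
  apply: continuous_subspaceT => x.
  apply: (@continuous_comp _ _ _ (fun y => u - y) (@Num.norm _ V) x); last first.
    exact: norm_continuous.
  by apply: continuousB; [exact: cst_continuous | move=> ?; apply: cvg_id].
have [x Mx xmin] := compact_EVT_min M_neq0 M_compact cont.
exists x; first by rewrite inE in Mx.
apply: lb_le_inf; first by case: M_neq0 => y My; exists `|u - y|, y.
by move=> _ [y My <-]; apply: xmin; rewrite inE.
Qed.

Lemma thickenP s u : thicken M s u -> exists2 x, M x & `|u - x| <= s.
Proof. by move=> Ms; have [x Mx ux] := dist_attained u; exists x => //; apply: le_trans Ms. Qed.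

Lemma compact_norm_ub : exists K, forall x, M x -> `|x| <= K.
Proof.
have [B [_ HB]] := compact_bounded M_compact.
by exists (B + 1) => x Mx; apply: (HB (B + 1)) => //; rewrite ltrDl.
Qed.

Lemma thicken_norm_ub s : exists K, forall u, thicken M s u -> `|u| <= K.
Proof.
have [K HK] := compact_norm_ub; exists (K + s) => u /thickenP [x Mx ux].
have := ler_normD x (u - x); rewrite addrC subrK; have := HK x Mx; lra.
Qed.

End Thickening.

Section Widths.
Variables (R : realType) (V : completeNormedModType R) (ip : V -> V -> R).
Variables (W M : set V).
Hypotheses (ip_inner : is_inner_product ip).
Hypotheses (W_sub : is_subspace W) (W_proj : has_orth_proj ip W).
Hypotheses (M_compact : compact M) (M_neq0 : M !=set0).

Local Notation P := (orth_proj ip W).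

Lemma norm_le_delta s u v :
  thicken M s u -> thicken M s v -> orth_compl ip W (u - v) ->
  `|u - v| <= delta ip W M s.
Proof.
move=> Mu Mv ouv; apply: ub_le_sup; last by exists u, v.
have [K HK] := thicken_norm_ub M_compact M_neq0 s.
exists (K + K) => _ [x [y [Mx [My [_ ->]]]]].
by apply: le_trans (ler_normB x y) _; apply: lerD; apply: HK.
Qed.

Lemma norm_le_delta_tilde s u v :
  M u -> M v -> `|P u - P v| <= s -> `|u - v| <= delta_tilde ip W M s.
Proof.
move=> Mu Mv Puv; apply: ub_le_sup; last by exists u, v.
have [K HK] := compact_norm_ub M_compact.
exists (K + K) => _ [x [y [Mx [My [_ ->]]]]].
by apply: le_trans (ler_normB x y) _; apply: lerD; apply: HK.
Qed.

Lemma delta_le_ub s r : 0 <= s ->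
  (forall u v, thicken M s u -> thicken M s v -> orth_compl ip W (u - v) ->
     `|u - v| <= r) -> delta ip W M s <= r.
Proof.
move=> s0 ub; apply: ge_sup; last by move=> _ [u [v [Mu [Mv [ouv ->]]]]]; apply: ub.
have [x Mx] := M_neq0; have Mxs : thicken M s x by apply: thicken_near Mx _; rewrite subrr normr0.
by exists `|x - x|, x, x; do 3 split => //; rewrite subrr => w _; rewrite ip0l.
Qed.

Lemma delta_tilde_le_ub s r : 0 <= s ->
  (forall u v, M u -> M v -> `|P u - P v| <= s -> `|u - v| <= r) ->
  delta_tilde ip W M s <= r.
Proof.
move=> s0 ub; apply: ge_sup; last by move=> _ [u [v [Mu [Mv [Puv ->]]]]]; apply: ub.
by have [x Mx] := M_neq0; exists `|x - x|, x, x; do 3 split => //; rewrite subrr normr0.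
Qed.

Lemma delta_le_delta_tilde s :
  0 <= s -> delta ip W M s <= delta_tilde ip W M (2 * s) + 2 * s.
Proof.
move=> s0; apply: delta_le_ub => // u v.
move=> /(thickenP M_compact M_neq0) [u0 Mu0 uu0] /(thickenP M_compact M_neq0) [v0 Mv0 vv0] ouv.
have shift : `|(u0 - v0) - (u - v)| <= 2 * s.
  rewrite subrACA; apply: le_trans (ler_normB _ _) _.
  by rewrite distrC (distrC v0); lra.
have P0 : `|P u0 - P v0| <= 2 * s.
  have <- : P ((u0 - v0) - (u - v)) = P u0 - P v0.
    rewrite (orth_projB ip_inner W_sub W_proj) (orth_proj_orth ip_inner W_sub W_proj ouv).
    by rewrite subr0 (orth_projB ip_inner W_sub W_proj).
  exact: le_trans (norm_orth_proj_le ip_inner W_proj _) shift.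
have := norm_le_delta_tilde Mu0 Mv0 P0.
have := ler_distD (u0 - v0) (u - v) 0; rewrite !subr0 (distrC (u - v)); lra.
Qed.

Lemma delta_tilde_le_delta s :
  0 <= s -> delta_tilde ip W M (2 * s) <= delta ip W M s + 2 * s.
Proof.
move=> s0; apply: delta_tilde_le_ub; first by rewrite mulr_ge0.
move=> u v Mu Mv Puv; set d := P u - P v in Puv; set h := 2^-1 *: d.
have hh : `|h| <= s by rewrite normrZ ger0_norm ?invr_ge0 //; lra.
have hhd : h + h = d by rewrite -scalerDl (_ : 2^-1 + 2^-1 = 1 :> R) ?scale1r //; lra.
have shifted : (u - h) - (v + h) = (u - v) - d by rewrite opprD addrACA -opprD hhd.
have : `|(u - h) - (v + h)| <= delta ip W M s.
  apply: norm_le_delta.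
  - by apply: thicken_near Mu _; rewrite addrAC subrr add0r normrN.
  - by apply: thicken_near Mv _; rewrite addrAC subrr add0r.
  have [_ ou] := orth_proj_spec W_proj u.
  have [_ ov] := orth_proj_spec W_proj v.
  by rewrite shifted /d -subrACA; apply: orth_complB.
rewrite shifted; have := ler_normD (u - v - d) d; rewrite subrK; lra.
Qed.

End Widths.

Theorem mainTheorem6 (R : realType) (V : completeNormedModType R)
  (ip : V -> V -> R) (W M : set V) :
  is_inner_product ip -> finite_dim_subspace W ->
  compact M -> M !=set0 ->
  forall sigma : R, 0 < sigma ->
    delta ip W M sigma - 2 * sigma <= delta_tilde ip W M (2 * sigma) /\
    delta_tilde ip W M (2 * sigma) <= delta ip W M sigma + 2 * sigma.
Proof.
move=> ip_inner /(finite_dim_subspace_orth_proj ip_inner) [W_sub W_proj] cM M0 s s0.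
have := delta_le_delta_tilde ip_inner W_sub W_proj cM M0 (ltW s0).
have := delta_tilde_le_delta ip_inner W_proj cM M0 (ltW s0).
by rewrite lerBlDr.
Qed.
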